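(* Let $w=(i,\epsilon)\in\mathcal W_0(d)$ and $i_0=\min\{i(l): l\in[d]\}$. Then for every block $\{l,m\}$ of the pair partition $\pi(w)$ we have $i(l)=i_0$ if and only if $i(m)=i_0$.
   Context: Fix an integer $p\ge2$; $F_p=\langle x_0,x_1,\dots\mid x_nx_k=x_kx_{n+p-1}\ \forall k<n\rangle$ with identity $e$. For $d\in\mathbb N$ and $[d]=\{1,\dots,d\}$, a word of length $d$ is a tuple $w=(x_{i(1)}^{\epsilon(1)},\dots,x_{i(d)}^{\epsilon(d)})$ with $i:[d]\to\mathbb N_0$, $\epsilon:[d]\to\{1,-1\}$, written $w=(i,\epsilon)$; $\mathrm{eval}(w)=x_{i(1)}^{\epsilon(1)}\cdots x_{i(d)}^{\epsilon(d)}$; $\mathcal W(d)$ is the set of words of length $d$ and $\mathcal W_0(d)=\{w\in\mathcal W(d):\mathrm{eval}(w)=e\}$. Rewriting relations: ($\rightsquigarrow$) a consecutive pair $(x_a^{-1},x_b)$ is replaced by $(x_b,x_{a+p-1}^{-1})$ if $a>b$, by $(x_{b+p-1},x_a^{-1})$ if $a<b$, by $(x_b,x_a^{-1})$ if $a=b$; ($\rightarrowtail$, on $\rightsquigarrow$-irreducible words) $(x_a,x_b)$ with $b-p+1>a$ is replaced by $(x_{b-p+1},x_a)$, and $(x_a^{-1},x_b^{-1})$ with $a-p+1>b$ by $(x_b^{-1},x_{a-p+1}^{-1})$. The normal form $\mathrm{NF}(w)$ is obtained by applying $\rightsquigarrow$ until irreducible and then $\rightarrowtail$ until irreducible (well defined).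 Each step swaps two adjacent letters; $\tau(w)\in S_d$ is defined by letting $\tau(w)(l)$ be the position in $\mathrm{NF}(w)$ of the letter originating from the $l$-th letter of $w$. For $w\in\mathcal W_0(d)$ ($d$ even), $\pi(w)$ is the pair partition of $[d]$ whose blocks are the pairs $\{l,m\}$ with $\tau(w)(l)+\tau(w)(m)=d+1$ (the image under $\tau(w)^{-1}$ of the rainbow partition $\{\{1,d\},\{2,d-1\},\dots,\{d/2,d/2+1\}\}$). *)

From mathcomp Require Import all_boot.
Set Implicit Arguments. Unset Strict Implicit. Unset Printing Implicit Defensive.

(* A letter x_a^eps is encoded as (a, b) with b = true iff eps = 1
   (b = false iff eps = -1).  A word of length d is a sequence of d letters;
   positions are 0-indexed (position l here is position l+1 in the paper). *)
Definition letter := (nat * bool)%type.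
Definition word := seq letter.

(* Two words evaluate to the same element iff they are related by the
   congruence generated by free cancellations x x^-1 = e, x^-1 x = e and the
   defining relations (monoid presentation of the group). *)
Inductive gstep (p : nat) : word -> word -> Prop :=
| gs_cancelPN (u v : word) (a : nat) :
    gstep p (u ++ [:: (a, true); (a, false)] ++ v) (u ++ v)
| gs_cancelNP (u v : word) (a : nat) :
    gstep p (u ++ [:: (a, false); (a, true)] ++ v) (u ++ v)
| gs_rel (u v : word) (n k : nat) : k < n ->
    gstep p (u ++ [:: (n, true); (k, true)] ++ v)
            (u ++ [:: (k, true); (n + p - 1, true)] ++ v).

Inductive geq (p : nat) : word -> word -> Prop :=
| geq_refl w : geq p w w
| geq_step w1 w2 : gstep p w1 w2 -> geq p w1 w2
| geq_sym w1 w2 : geq p w1 w2 -> geq p w2 w1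
| geq_trans w1 w2 w3 : geq p w1 w2 -> geq p w2 w3 -> geq p w1 w3.

Definition eval_is_e (p : nat) (w : word) : Prop := geq p w [::].

(* ---------- Rewriting with tracking of letter origins ---------------------
   A tracked word is a sequence of (letter, origin) where origin is the
   (0-indexed) position in the original word the letter comes from. *)
Definition tword := seq (letter * nat).

Inductive rw1 (p : nat) : tword -> tword -> Prop :=
| rw1_gt (s1 s2 : tword) (a b o1 o2 : nat) : b < a ->
    rw1 p (s1 ++ [:: ((a, false), o1); ((b, true), o2)] ++ s2)
          (s1 ++ [:: ((b, true), o2); ((a + p - 1, false), o1)] ++ s2)
| rw1_lt (s1 s2 : tword) (a b o1 o2 : nat) : a < b ->
    rw1 p (s1 ++ [:: ((a, false), o1); ((b, true), o2)] ++ s2)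
          (s1 ++ [:: ((b + p - 1, true), o2); ((a, false), o1)] ++ s2)
| rw1_eq (s1 s2 : tword) (a o1 o2 : nat) :
    rw1 p (s1 ++ [:: ((a, false), o1); ((a, true), o2)] ++ s2)
          (s1 ++ [:: ((a, true), o2); ((a, false), o1)] ++ s2).

Inductive rw2 (p : nat) : tword -> tword -> Prop :=
| rw2_pos (s1 s2 : tword) (a b o1 o2 : nat) : a + p <= b ->
    rw2 p (s1 ++ [:: ((a, true), o1); ((b, true), o2)] ++ s2)
          (s1 ++ [:: ((b.+1 - p, true), o2); ((a, true), o1)] ++ s2)
| rw2_neg (s1 s2 : tword) (a b o1 o2 : nat) : b + p <= a ->
    rw2 p (s1 ++ [:: ((a, false), o1); ((b, false), o2)] ++ s2)
          (s1 ++ [:: ((b, false), o2); ((a.+1 - p, false), o1)] ++ s2).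

Inductive star (T : Type) (R : T -> T -> Prop) : T -> T -> Prop :=
| star_refl x : star R x x
| star_step x y z : R x y -> star R y z -> star R x z.

Definition irreducible (T : Type) (R : T -> T -> Prop) (x : T) : Prop :=
  forall y, ~ R x y.

Definition track (w : word) : tword := zip w (iota 0 (size w)).

Definition NF_track (p : nat) (w : word) (t : tword) : Prop :=
  exists t1, [/\ star (rw1 p) (track w) t1, irreducible (rw1 p) t1,
                 star (rw2 p) t1 t & irreducible (rw2 p) t].

Definition tau (t : tword) (l : nat) : nat := index l (map snd t).

(* {l, m} is a block of pi(w): tau(l) + tau(m) = d + 1 in 1-indexed terms,
   i.e. tau(l) + tau(m) = d - 1 in 0-indexed terms. *)
Definition pi_block (w : word) (t : tword) (l m : nat) : bool :=
  [&& l < size w, m < size w & tau t l + tau t m == (size w).-1].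

Definition idx (w : word) (l : nat) : nat := (nth (0, true) w l).1.
Definition imin (w : word) : nat :=
  foldr minn (head 0 (map fst w)) (map fst w).

(* F_p acts on points (r, s), where r is a natural number and s an infinite
   stream of digits in [0, p): the generator x_a fixes r < a, pushes the
   digit r - a onto s and sets r := a when a <= r < a + p, and decreases r by
   p - 1 otherwise.  All defining relations hold for this action, and so does
   every rewriting step; hence the tracked normal form t of a word w with
   eval(w) = e acts trivially.  The rewriting ~> moves all positive letters of
   t in front of all negative ones, and irreducibility for >-> makes both the
   positive part x_I and the inverse x_J of the negative part (J is its index
   sequence reversed) p-ary normal forms.  Normal forms of positive words are separated by the action, so
   x_I x_J^-1 = e forces I = J: the index sequence of t is a palindrome.
   Finally, rewriting never changes an index equal to i_0 nor lowers one above
   it, so a letter of t has index i_0 exactly when its origin in w has; the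
   blocks of pi(w) are mirror positions of t. *)
From Pilot Require Import Defs.
From mathcomp Require Import all_boot zify.
From Stdlib Require Import FunctionalExtensionality.
Set Implicit Arguments. Unset Strict Implicit.
Unset Printing Implicit Defensive.

Definition stream := nat -> nat.
Definition scons (i : nat) (s : stream) : stream :=
  fun k => if k is k'.+1 then s k' else i.
Definition stail (s : stream) : stream := fun k => s k.+1.
Definition point := (nat * stream)%type.

Section Action.
Variable p : nat.

Definition valid (x : point) := forall k, x.2 k < p.

Definition merge (a : nat) (x : point) : point :=
  let: (r, s) := x in
  if r < a then (r, s) else if r < a + p then (a, scons (r - a) s)
  else (r.+1 - p, s).

Definition unmerge (a : nat) (x : point) : point :=
  let: (r, s) := x in
  if r < a then (r, s) else if r == a then (a + s 0, stail s)
  else (r + p - 1, s).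

Lemma merge_valid a x : valid x -> valid (merge a x).
Proof.
case: x => r s /= v; rewrite /merge.
by case: ifP => // ra; case: ifP => H //= [|k] //=; lia.
Qed.

Lemma unmerge_valid a x : valid x -> valid (unmerge a x).
Proof.
case: x => r s /= v; rewrite /unmerge.
by case: ifP => // _; case: ifP => H //= k; exact: v.
Qed.

Lemma unmergeK a x : valid x -> unmerge a (merge a x) = x.
Proof.
case: x => r s v /=; case: ifP => [H|H]; first by rewrite /= H.
case: ifP => [H2|H2] /=; first by rewrite ltnn eqxx /=; congr (_, _); lia.
have -> : r.+1 - p < a = false by lia.
have -> : (r.+1 - p == a) = false by lia.
by congr (_, _); lia.
Qed.

Lemma mergeK a x : valid x -> merge a (unmerge a x) = x.
Proof.
case: x => r s v /=; case: ifP => [H|H]; first by rewrite /= H.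
case: ifP => [/eqP->|H2] /=.
  have -> : a + s 0 < a = false by lia.
  have -> : a + s 0 < a + p by have := v 0; rewrite /=; lia.
  rewrite addKn; congr (_, _).
  by apply: functional_extensionality => -[|k].
have -> : r + p - 1 < a = false by lia.
have -> : r + p - 1 < a + p = false by lia.
by congr (_, _); lia.
Qed.

Hypothesis p_gt1 : 1 < p.

Lemma merge_rel n k x :
  k < n -> merge n (merge k x) = merge k (merge (n + p - 1) x).
Proof.
case: x => r s kn /=.
repeat (case: ifP => ? /=); try (exfalso; lia); try done.
have -> : (n + p - 1).+1 - p = n by lia.
by have -> : r - (n + p - 1) = r.+1 - p - n by lia.
Qed.

Lemma unmerge_merge_gt a b x : valid x -> b < a ->
  unmerge a (merge b x) = merge b (unmerge (a + p - 1) x).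
Proof.
move=> v ba; have vy := unmerge_valid (a + p - 1) v.
rewrite -{1}(mergeK (a + p - 1) v) -merge_rel // unmergeK //.
exact: merge_valid.
Qed.

Lemma unmerge_merge_lt a b x : valid x -> a < b ->
  unmerge a (merge b x) = merge (b + p - 1) (unmerge a x).
Proof.
move=> v ab; have vy := unmerge_valid a v.
rewrite -{1}(mergeK a v) merge_rel // unmergeK //.
exact: merge_valid.
Qed.

Lemma merge_rel_pos a b x :
  a + p <= b -> merge a (merge b x) = merge (b.+1 - p) (merge a x).
Proof.
move=> ab; rewrite [RHS]merge_rel; last by lia.
by have -> : b.+1 - p + p - 1 = b by lia.
Qed.

Lemma unmerge_rel_neg a b x : valid x -> b + p <= a ->
  unmerge a (unmerge b x) = unmerge b (unmerge (a.+1 - p) x).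
Proof.
move=> v ba; set n := a.+1 - p; set z := unmerge b (unmerge n x).
have vz : valid z by apply/unmerge_valid/unmerge_valid.
have vbz : valid (merge a z) by exact: merge_valid.
have -> : x = merge b (merge a z).
  rewrite merge_rel_pos // /z mergeK ?mergeK //; exact: unmerge_valid.
by rewrite unmergeK // unmergeK.
Qed.

Definition lact (y : letter) := if y.2 then merge y.1 else unmerge y.1.

Fixpoint act (w : word) (x : point) : point :=
  if w is y :: w' then lact y (act w' x) else x.

Lemma act_cat u v x : act (u ++ v) x = act u (act v x).
Proof. by elim: u => //= y u ->. Qed.

Lemma act_valid w x : valid x -> valid (act w x).
Proof.
elim: w => //= -[a [|]] w IH v /=.
- exact/merge_valid/IH.
- exact/unmerge_valid/IH.
Qed.

Lemma geq_act w1 w2 :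
  Defs.geq p w1 w2 -> forall x, valid x -> act w1 x = act w2 x.
Proof.
elim=> {w1 w2} [//|w1 w2 st|w1 w2 _ IH|w1 w2 w3 _ IH1 _ IH2] x v.
- have vv := act_valid _ v.
  case: st => [u v' a|u v' a|u v' n k kn]; rewrite !act_cat /= /lact /=.
  + by rewrite mergeK.
  + by rewrite unmergeK.
  + by rewrite merge_rel.
- by rewrite IH.
- by rewrite IH1 // IH2.
Qed.

Lemma rw1_act s s' x :
  rw1 p s s' -> valid x -> act (map fst s) x = act (map fst s') x.
Proof.
case=> [s1 s2 a b o1 o2 H|s1 s2 a b o1 o2 H|s1 s2 a o1 o2] v;
  rewrite !map_cat !act_cat /= /lact /=; have v2 := act_valid (map fst s2) v.
- by rewrite unmerge_merge_gt.
- by rewrite unmerge_merge_lt.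
- by rewrite unmergeK ?mergeK.
Qed.

Lemma rw2_act s s' x :
  rw2 p s s' -> valid x -> act (map fst s) x = act (map fst s') x.
Proof.
case=> s1 s2 a b o1 o2 H v; rewrite !map_cat !act_cat /= /lact /=;
  have v2 := act_valid (map fst s2) v.
- by rewrite merge_rel_pos.
- by rewrite unmerge_rel_neg.
Qed.

Definition pos (I : seq nat) : word := map (fun a => (a, true)) I.
Definition neg (I : seq nat) : word := map (fun a => (a, false)) I.

Lemma act_neg_pos I x : valid x -> act (neg I) (act (pos (rev I)) x) = x.
Proof.
elim: I x => //= b I IH x v.
rewrite rev_cons /pos map_rcons -cats1 act_cat /= /lact /=.
by rewrite IH ?unmergeK //; apply: merge_valid.
Qed.

(* Positive words only push digits, so their action on (r, s) is determined
   by a pair (r', L), the digits L being prepended to s. *)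
Definition merge_list (a : nat) (q : nat * seq nat) : nat * seq nat :=
  let: (r, L) := q in
  if r < a then (r, L) else if r < a + p then (a, (r - a) :: L)
  else (r.+1 - p, L).

Fixpoint pos_act (I : seq nat) (r : nat) : nat * seq nat :=
  if I is a :: I' then merge_list a (pos_act I' r) else (r, [::]).

Fixpoint prepend (L : seq nat) (s : stream) : stream :=
  if L is i :: L' then scons i (prepend L' s) else s.

Lemma act_pos I r s :
  act (pos I) (r, s) = ((pos_act I r).1, prepend (pos_act I r).2 s).
Proof.
elim: I => //= a I ->; rewrite /lact /=.
by case: (pos_act I r) => r' L /=; case: ifP => //; case: ifP.
Qed.

Lemma merge_list_inj a : injective (merge_list a).
Proof.
move=> [r1 L1] [r2 L2] /=.
repeat (case: ifP => ? /=); move=> [] *; subst; try (exfalso; lia); try done.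
- by congr (_, _); lia.
- by congr (_, _); lia.
Qed.

Lemma pos_act_cons_neq a I r : pos_act (a :: I) r <> (a, [::]).
Proof.
rewrite /=; case: (pos_act I r) => r' L /=.
by repeat (case: ifP => ? /=); move=> [] *; subst; try lia.
Qed.

(* No >->-step applies to x_a x_b, nor to x_b^-1 x_a^-1. *)
Definition nf_rel (a b : nat) := b < a + p.

Lemma pos_act_nf_reaches I r :
  sorted nf_rel I -> (if I is a :: _ then a < r else true) ->
  exists r', pos_act I r' = (r, [::]).
Proof.
elim: I r => [|a I IH] r /=; first by exists r.
move=> srt ar; have [r' e] : exists r', pos_act I r' = (r + p - 1, [::]).
  apply: IH; first exact: path_sorted srt.
  by case: I srt => // b I /= /andP[]; rewrite /nf_rel; lia.
exists r'; rewrite e /=.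
have -> : r + p - 1 < a = false by lia.
have -> : r + p - 1 < a + p = false by lia.
by congr (_, _); lia.
Qed.

Lemma pos_act_nf_inj I J : sorted nf_rel I -> sorted nf_rel J ->
  pos_act I =1 pos_act J -> I = J.
Proof.
elim: I J => [|a I IH] [|b J] //.
- by move=> _ _ /(_ b) e; have := @pos_act_cons_neq b J b; rewrite -e.
- by move=> _ _ /(_ a) e; have := @pos_act_cons_neq a I a; rewrite e.
move=> sI sJ e; have [ab|ba|ab] := ltngtP a b.
- have [r' e'] := @pos_act_nf_reaches (a :: I) b sI ab.
  by have := @pos_act_cons_neq b J r'; rewrite -e e'.
- have [r' e'] := @pos_act_nf_reaches (b :: J) a sJ ba.
  by have := @pos_act_cons_neq a I r'; rewrite e e'.
subst b; congr (_ :: _).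
apply: IH; [exact: path_sorted sI | exact: path_sorted sJ |].
by move=> r; apply: (@merge_list_inj a); exact: e r.
Qed.

Lemma prepend_inj L1 L2 :
  (forall s, (forall k, s k < p) -> prepend L1 s = prepend L2 s) -> L1 = L2.
Proof.
(* The streams 0 0 0 ... and 1 1 1 ... tell apart lists of different
   lengths. *)
have s0 : forall k, (fun _ : nat => 0) k < p by move=> k; lia.
have s1 : forall k, (fun _ : nat => 1) k < p by [].
elim: L1 L2 => [|i L1 IH] [|j L2] // e;
  have /= e0 := congr1 (fun f => f 0) (e _ s0);
  have /= e1 := congr1 (fun f => f 0) (e _ s1); try lia.
rewrite e0; congr (_ :: _); apply: IH => s vs.
apply: functional_extensionality => k.
exact: (congr1 (fun f => f k.+1) (e _ vs)).
Qed.

Lemma act_pos_nf_inj I J : sorted nf_rel I -> sorted nf_rel J ->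
  (forall x, valid x -> act (pos I) x = act (pos J) x) -> I = J.
Proof.
move=> sI sJ e; apply: pos_act_nf_inj => // r.
have e_r s : (forall k, s k < p) -> act (pos I) (r, s) = act (pos J) (r, s).
  by move=> vs; exact: e.
have vs0 : forall k, (fun _ : nat => 0) k < p by move=> k; lia.
move: (e_r _ vs0); rewrite !act_pos => -[e1 _].
rewrite [pos_act I r]surjective_pairing [pos_act J r]surjective_pairing e1.
congr (_, _); apply: prepend_inj => s vs.
by move: (e_r _ vs); rewrite !act_pos => -[].
Qed.

End Action.

Lemma star_preserves T (R : T -> T -> Prop) (P : T -> Prop) x y :
  (forall a b, R a b -> P a -> P b) -> star R x y -> P x -> P y.
Proof. by move=> H; elim=> // a b z /H; auto. Qed.

Lemma NF_track_preserves p w t (P : tword -> Prop) :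
  (forall s s', rw1 p s s' -> P s -> P s') ->
  (forall s s', rw2 p s s' -> P s -> P s') ->
  NF_track p w t -> P (track w) -> P t.
Proof.
move=> H1 H2 [t1 [st1 _ st2 _]] Pw.
exact: star_preserves H2 st2 (star_preserves H1 st1 Pw).
Qed.

Lemma perm_swap_origins (s1 s2 : tword) e1 e2 f1 f2 :
  f1.2 = e2.2 -> f2.2 = e1.2 ->
  perm_eq (map snd (s1 ++ [:: e1; e2] ++ s2))
          (map snd (s1 ++ [:: f1; f2] ++ s2)).
Proof.
move=> h1 h2; rewrite !map_cat perm_cat2l perm_cat2r /= h1 h2.
by rewrite (perm_catC [:: e1.2] [:: e2.2]).
Qed.

Lemma rw1_perm p s s' : rw1 p s s' -> perm_eq (map snd s) (map snd s').
Proof. by case=> *; apply: perm_swap_origins. Qed.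

Lemma rw2_perm p s s' : rw2 p s s' -> perm_eq (map snd s) (map snd s').
Proof. by case=> *; apply: perm_swap_origins. Qed.

Lemma NF_track_origins p w t :
  NF_track p w t -> perm_eq (map snd t) (iota 0 (size w)).
Proof.
move=> nf; pose P (s : tword) := perm_eq (map snd s) (iota 0 (size w)).
apply: (NF_track_preserves (P := P) _ _ nf).
- by move=> s s' /rw1_perm; rewrite perm_sym => /perm_trans; apply.
- by move=> s s' /rw2_perm; rewrite perm_sym => /perm_trans; apply.
by rewrite /P /track -/(unzip2 _) unzip2_zip ?size_iota.
Qed.

Lemma NF_track_size p w t : NF_track p w t -> size t = size w.
Proof.
by move=> /NF_track_origins/perm_size; rewrite size_map size_iota.
Qed.

Lemma NF_track_mem_origin p w t l :
  NF_track p w t -> l < size w -> l \in map snd t.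
Proof. by move=> nf lw; rewrite (perm_mem (NF_track_origins nf)) mem_iota. Qed.

Lemma NF_track_tau_lt p w t l :
  NF_track p w t -> l < size w -> tau t l < size t.
Proof.
by move=> nf /(NF_track_mem_origin nf); rewrite -index_mem size_map.
Qed.

Lemma NF_track_act_id p w t x : 1 < p -> eval_is_e p w -> NF_track p w t ->
  valid p x -> act p (map fst t) x = x.
Proof.
move=> p_gt1 ev nf; move: x.
pose P (s : tword) := forall x, valid p x -> act p (map fst s) x = x.
apply: (NF_track_preserves (P := P) _ _ nf).
- by move=> s s' H Hs x v; rewrite -(rw1_act p_gt1 H v) Hs.
- by move=> s s' H Hs x v; rewrite -(rw2_act p_gt1 H v) Hs.
move=> x v; rewrite /track -/(unzip1 _) unzip1_zip ?size_iota //.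
exact: (geq_act p_gt1 ev v).
Qed.

Definition tracks_min (w : word) (c : nat) (e : letter * nat) :=
  (c <= e.1.1) && ((e.1.1 == c) == (idx w e.2 == c)).

Lemma tracks_min_raise w c a sg o b sg' :
  tracks_min w c ((a, sg), o) -> c < a -> c < b -> tracks_min w c ((b, sg'), o).
Proof.
rewrite /tracks_min /= => /andP[_ /eqP e] ca cb.
by rewrite gtn_eqF // in e; rewrite -e gtn_eqF // eqxx andbT ltnW.
Qed.

Lemma rw1_tracks_min p w c s s' : 0 < p -> rw1 p s s' ->
  all (tracks_min w c) s -> all (tracks_min w c) s'.
Proof.
move=> p_gt0; case=> [s1 s2 a b o1 o2 H|s1 s2 a b o1 o2 H|s1 s2 a o1 o2];
  rewrite !all_cat /= !andbT => /and3P[-> /andP[g1 g2] ->] /=; rewrite ?andbT.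
- have /andP[/= cb _] := g2; rewrite g2 /=.
  by apply: tracks_min_raise g1 _ _; lia.
- have /andP[/= ca _] := g1; rewrite g1 andbT.
  by apply: tracks_min_raise g2 _ _; lia.
- by rewrite g1 g2.
Qed.

Lemma rw2_tracks_min p w c s s' : 0 < p -> rw2 p s s' ->
  all (tracks_min w c) s -> all (tracks_min w c) s'.
Proof.
move=> p_gt0; case=> [s1 s2 a b o1 o2 H|s1 s2 a b o1 o2 H];
  rewrite !all_cat /= !andbT => /and3P[-> /andP[g1 g2] ->] /=; rewrite ?andbT.
- have /andP[/= ca _] := g1; rewrite g1 andbT.
  by apply: tracks_min_raise g2 _ _; lia.
- have /andP[/= cb _] := g2; rewrite g2 /=.
  by apply: tracks_min_raise g1 _ _; lia.
Qed.

Lemma imin_le w l : l < size w -> imin w <= idx w l.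
Proof.
move=> lw; rewrite /imin /idx.
have : (nth (0, true) w l).1 \in map fst w.
  by rewrite -(nth_map _ 0) ?mem_nth ?size_map.
elim: (map fst w) (head 0 (map fst w)) => //= x L IH d.
rewrite in_cons => /orP[/eqP ->|/IH H]; first exact: geq_minl.
exact: leq_trans (geq_minr _ _) (H d).
Qed.

Lemma NF_track_tracks_min p w t : 0 < p -> NF_track p w t ->
  all (tracks_min w (imin w)) t.
Proof.
move=> p_gt0 nf.
apply: (NF_track_preserves (P := all (tracks_min w (imin w))) _ _ nf).
- by move=> s s'; apply: rw1_tracks_min.
- by move=> s s'; apply: rw2_tracks_min.
apply/(all_nthP ((0, true), 0)) => i.
rewrite /track size_zip size_iota minnn => iw.
rewrite (nth_zip (0, true) 0) ?size_iota // nth_iota // add0n /tracks_min /=.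
by rewrite imin_le //= eqxx.
Qed.

Definition ixs (t : tword) : seq nat := map (fun e => e.1.1) t.
Definition signs (t : tword) : seq bool := map (fun e => e.1.2) t.

Lemma NF_track_idx_min p w t l : 0 < p -> NF_track p w t -> l < size w ->
  (idx w l == imin w) = (nth 0 (ixs t) (tau t l) == imin w).
Proof.
move=> p_gt0 nf lw; have lt := NF_track_tau_lt nf lw.
rewrite /ixs (nth_map ((0, true), 0)) //.
have /andP[_ /eqP ->] :=
  allP (NF_track_tracks_min p_gt0 nf) _ (mem_nth ((0, true), 0) lt).
by rewrite -(nth_map _ 0) // nth_index // (NF_track_mem_origin nf).
Qed.

Lemma rw1_cat p u v s s' : rw1 p s s' -> rw1 p (u ++ s ++ v) (u ++ s' ++ v).
Proof.
case=> [s1 s2 a b o1 o2 H|s1 s2 a b o1 o2 H|s1 s2 a o1 o2]; rewrite -!catA.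
- by move: (rw1_gt p (u ++ s1) (s2 ++ v) o1 o2 H); rewrite -!catA.
- by move: (rw1_lt p (u ++ s1) (s2 ++ v) o1 o2 H); rewrite -!catA.
- by move: (rw1_eq p (u ++ s1) (s2 ++ v) a o1 o2); rewrite -!catA.
Qed.

Lemma rw2_cat p u v s s' : rw2 p s s' -> rw2 p (u ++ s ++ v) (u ++ s' ++ v).
Proof.
case=> [s1 s2 a b o1 o2 H|s1 s2 a b o1 o2 H]; rewrite -!catA.
- by move: (rw2_pos (u ++ s1) (s2 ++ v) o1 o2 H); rewrite -!catA.
- by move: (rw2_neg (u ++ s1) (s2 ++ v) o1 o2 H); rewrite -!catA.
Qed.

Lemma irreducible_rw1_infix p u s v :
  irreducible (rw1 p) (u ++ s ++ v) -> irreducible (rw1 p) s.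
Proof. by move=> irr s' /(rw1_cat u v); apply: irr. Qed.

Lemma irreducible_rw2_infix p u s v :
  irreducible (rw2 p) (u ++ s ++ v) -> irreducible (rw2 p) s.
Proof. by move=> irr s' /(rw2_cat u v); apply: irr. Qed.

Definition pos_before (b1 b2 : bool) := b2 ==> b1.

Lemma irreducible_rw1_signs p t :
  irreducible (rw1 p) t -> sorted pos_before (signs t).
Proof.
elim: t => [|e1 t IH] //= irr.
have irr_t : irreducible (rw1 p) t.
  by apply: (@irreducible_rw1_infix p [:: e1] t [::]); rewrite cats0.
case: t irr irr_t IH => [|e2 t] //= irr irr_t IH.
apply/andP; split; last exact: IH.
case: e1 e2 {irr_t IH} irr => [[a [|]] o1] [[b [|]] o2] //= irr.
have [ba|ab|ab] := ltngtP b a.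
- by case: (irr _ (rw1_gt p [::] t o1 o2 ba)).
- by case: (irr _ (rw1_lt p [::] t o1 o2 ab)).
- by subst b; case: (irr _ (rw1_eq p [::] t a o1 o2)).
Qed.

Lemma rw2_signs p s s' : rw2 p s s' -> signs s' = signs s.
Proof. by case=> *; rewrite /signs !map_cat. Qed.

Lemma sorted_signs_cat t : sorted pos_before (signs t) ->
  exists P N,
    [/\ t = P ++ N, all (fun e => e.1.2) P & all (fun e => ~~ e.1.2) N].
Proof.
elim: t => [|e t IH] st; first by exists [::], [::].
case: (boolP e.1.2) => es.
  have [P [N [-> aP aN]]] := IH (path_sorted st).
  by exists (e :: P), N; rewrite /= es.
exists [::], (e :: t); split => //=; rewrite es /=.
have pos_before_trans : transitive pos_before by move=> [] [] [].
have := order_path_min pos_before_trans st; rewrite /signs all_map.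
by apply: sub_all => f /=; rewrite /pos_before (negbTE es) implybF.
Qed.

Lemma irreducible_rw2_pos p P : all (fun e => e.1.2) P ->
  irreducible (rw2 p) P -> sorted (nf_rel p) (ixs P).
Proof.
elim: P => [|e1 P IH] //= /andP[s1 aP] irr.
have irrP : irreducible (rw2 p) P.
  by apply: (@irreducible_rw2_infix p [:: e1] P [::]); rewrite cats0.
case: P aP irr irrP IH => [|e2 P] //= /andP[s2 aP] irr irrP IH.
apply/andP; split; last by apply: IH; rewrite //= s2.
move: e1 e2 s1 s2 {irrP IH} irr => [[a []] o1] [[b []] o2] //= _ _ irr.
rewrite /nf_rel ltnNge; apply/negP => ab.
exact: irr _ (rw2_pos [::] P o1 o2 ab).
Qed.

Lemma irreducible_rw2_neg p N : all (fun e => ~~ e.1.2) N ->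
  irreducible (rw2 p) N -> sorted (nf_rel p) (rev (ixs N)).
Proof.
rewrite rev_sorted; elim: N => [|e1 N IH] //= /andP[s1 aN] irr.
have irrN : irreducible (rw2 p) N.
  by apply: (@irreducible_rw2_infix p [:: e1] N [::]); rewrite cats0.
case: N aN irr irrN IH => [|e2 N] //= /andP[s2 aN] irr irrN IH.
apply/andP; split; last by apply: IH; rewrite //= s2.
move: e1 e2 s1 s2 {irrN IH} irr => [[a []] o1] [[b []] o2] //= _ _ irr.
rewrite /nf_rel ltnNge; apply/negP => ba.
exact: irr _ (rw2_neg [::] N o1 o2 ba).
Qed.

Lemma map_fst_pos (P : tword) :
  all (fun e => e.1.2) P -> map fst P = pos (ixs P).
Proof.
move=> aP; rewrite /pos /ixs -map_comp; apply/eq_in_map.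
by move=> -[[a []] o] // /(allP aP).
Qed.

Lemma map_fst_neg (N : tword) :
  all (fun e => ~~ e.1.2) N -> map fst N = neg (ixs N).
Proof.
move=> aN; rewrite /neg /ixs -map_comp; apply/eq_in_map.
by move=> -[[a []] o] // /(allP aN).
Qed.

Lemma ixs_palindrome p t : 1 < p ->
  (forall x, valid p x -> act p (map fst t) x = x) ->
  sorted pos_before (signs t) -> irreducible (rw2 p) t -> rev (ixs t) = ixs t.
Proof.
move=> p_gt1 act_id /sorted_signs_cat [P [N [tPN aP aN]]]; subst t => irr.
have irrP : irreducible (rw2 p) P by exact: (@irreducible_rw2_infix p [::] P N).
have irrN : irreducible (rw2 p) N.
  by apply: (@irreducible_rw2_infix p P N [::]); rewrite cats0.
have same_act x :
    valid p x -> act p (pos (ixs P)) x = act p (pos (rev (ixs N))) x.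
  move=> v; rewrite -{1}(act_neg_pos (ixs N) v) -act_cat.
  rewrite -(map_fst_pos aP) -(map_fst_neg aN) -map_cat act_id //.
  exact: act_valid.
have := act_pos_nf_inj p_gt1 (irreducible_rw2_pos aP irrP)
  (irreducible_rw2_neg aN irrN) same_act.
by rewrite /ixs map_cat -/(ixs P) -/(ixs N) => ->; rewrite rev_cat revK.
Qed.

Lemma NF_track_palindrome p w t : 1 < p -> eval_is_e p w -> NF_track p w t ->
  rev (ixs t) = ixs t.
Proof.
move=> p_gt1 ev nf; have [t1 [_ irr1 st2 irr2]] := nf.
apply: ixs_palindrome p_gt1 (fun x => NF_track_act_id p_gt1 ev nf) _ irr2.
apply: (star_preserves (P := fun s => sorted pos_before (signs s)) _ st2).
  by move=> a b /rw2_signs ->.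
exact: irreducible_rw1_signs irr1.
Qed.

Theorem mainTheorem4 (p : nat) (w : word) (t : tword) (l m : nat) :
  2 <= p ->
  eval_is_e p w ->
  NF_track p w t ->
  pi_block w t l m ->
  (idx w l == imin w) = (idx w m == imin w).
Proof.
move=> p_gt1 ev nf /and3P[lw mw /eqP mirror].
have p_gt0 : 0 < p by exact: ltnW.
rewrite !(NF_track_idx_min p_gt0 nf) //.
rewrite -[in RHS](NF_track_palindrome p_gt1 ev nf) nth_rev; last first.
  by rewrite size_map (NF_track_tau_lt nf).
by rewrite size_map (NF_track_size nf); congr (nth _ _ _ == _); lia.
Qed.
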